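(* Fix an MDP $M$ and a layer $h\in[H]$. Suppose we have a sequence of functions $g^{(1)},\dots,g^{(T)}:\mathcal{X}\times\mathcal{A}\to[0,B]$ and policies $\pi^{(1)},\dots,\pi^{(T)}\in\Pi$ such that for all $t\in[T]$, $\sum_{i<t}\mathbb{E}^{M,\pi^{(i)}}[(g^{(t)}(x_h,a_h))^2]\le\beta^2$. Then $$\sum_{t=1}^T\mathbb{E}^{M,\pi^{(t)}}[g^{(t)}(x_h,a_h)]\le 2(C^M_{1;h})^{1/3}(\beta^2B+B^3)^{1/3}T^{2/3}.$$
   Context: Episodic MDP $M$ over countable $\mathcal{X}$, actions $\mathcal{A}$, horizon $H$; $\Pi\subseteq\Pi_{\mathrm{RNS}}$ a policy class; $d^{M,\pi}_h(x,a)$ the layer-$h$ occupancy; $C^M_{1;h}=\inf_{\mu\in\Delta(\mathcal{X}\times\mathcal{A})}\sup_{\pi\in\Pi}\mathbb{E}^{M,\pi}\big[\frac{d^{M,\pi}_h(x_h,a_h)}{\mu(x_h,a_h)}\big]$. *)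

From HB Require Import structures.
From mathcomp Require Import all_boot all_order all_algebra.
From mathcomp Require Import all_classical all_reals all_analysis.
Set Implicit Arguments. Unset Strict Implicit. Unset Printing Implicit Defensive.
Import Order.TTheory GRing.Theory Num.Theory.
Local Open Scope classical_set_scope.
Local Open Scope ring_scope.

Definition is_dist (R : realType) (T : choiceType) (p : T -> R) : Prop :=
  (forall t, 0 <= p t) /\ (\esum_(t in [set: T]) (p t)%:E = 1)%E.

(* Episodic MDP dynamics (rewards play no role here): initial state law d_1 and
   layer-dependent transitions  m_trans h x a x' = P_h(x' | x, a)
   (transition from layer h to layer h+1, layers numbered from 1). *)
Record mdp (R : realType) (X A : countType) := MDP {
  m_init : X -> R;
  m_trans : nat -> X -> A -> X -> R;
  m_init_dist : is_dist m_init;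
  m_trans_dist : forall h x a, is_dist (m_trans h x a) }.

(* Randomized non-stationary (history dependent) policies:
   pi h tau x a = pi_h(a | tau, x), tau = (x_1,a_1,...,x_{h-1},a_{h-1}). *)
Definition policy (R : realType) (X A : countType) :=
  nat -> seq (X * A) -> X -> A -> R.

Definition is_rns_policy (R : realType) (X A : countType) (pi : policy R X A) : Prop :=
  forall h tau x, is_dist (pi h tau x).

(* Probability that the trajectory starts with the prefix tau.
   k = number of layers already consumed, prev = last (state, action), past = history. *)
Fixpoint traj_prob (R : realType) (X A : countType) (M : mdp R X A) (pi : policy R X A)
  (k : nat) (prev : option (X * A)) (past tau : seq (X * A)) : R :=
  match tau with
  | [::] => 1
  | (x, a) :: tau' =>
      (match prev with
       | None => m_init M x
       | Some (x0, a0) => m_trans M k x0 a0 x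
       end) * pi k.+1 past x a * traj_prob M pi k.+1 (Some (x, a)) (rcons past (x, a)) tau'
  end.

(* Layer-h occupancy  d_h^{M,pi}(x,a) = P^{M,pi}[(x_h,a_h) = (x,a)]  (h >= 1). *)
Definition occ (R : realType) (X A : countType) (M : mdp R X A) (pi : policy R X A)
  (h : nat) (xa : X * A) : \bar R :=
  (\esum_(tau in [set tau | exists tau', tau = rcons tau' xa /\ size tau' = h.-1])
     (traj_prob M pi 0 None [::] tau)%:E)%E.

(* E^{M,pi}[ f(x_h,a_h) ] for f >= 0. *)
Definition expect (R : realType) (X A : countType) (M : mdp R X A) (pi : policy R X A)
  (h : nat) (f : X * A -> R) : \bar R :=
  (\esum_(xa in [set: X * A]) (occ M pi h xa * (f xa)%:E))%E.

(* the ratio d / mu, with d / 0 = +oo (multiplied by d, so 0 * +oo = 0). *)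
Definition ratio_term (R : realType) (d : \bar R) (m : R) : \bar R :=
  if 0 < m then (d * (m^-1)%:E)%E else +oo%E.

(* E^{M,pi}[ d_h^{M,pi}(x_h,a_h) / mu(x_h,a_h) ] *)
Definition cov_obj (R : realType) (X A : countType) (M : mdp R X A) (pi : policy R X A)
  (h : nat) (mu : X * A -> R) : \bar R :=
  (\esum_(xa in [set: X * A]) (occ M pi h xa * ratio_term (occ M pi h xa) (mu xa)))%E.

Definition Ccov (R : realType) (X A : countType) (M : mdp R X A) (Pi : set (policy R X A))
  (h : nat) : \bar R :=
  ereal_inf [set ereal_sup [set cov_obj M pi h mu | pi in Pi] | mu in [set mu | is_dist mu]].

From HB Require Import structures.
From mathcomp Require Import all_boot all_order all_algebra.
From mathcomp Require Import all_classical all_reals all_analysis.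
From mathcomp Require Import ring lra.
Import Order.TTheory GRing.Theory Num.Theory.
Local Open Scope classical_set_scope.
Local Open Scope ring_scope.
Set Implicit Arguments.
Unset Strict Implicit.

(** Fix [C > C^M_{1;h}] and a distribution [mu] with [E^{M,pi}[d^pi_h / mu] <= C] for
   every [pi] in [Pi].  At a pair [z], write [d_t] for the occupancy of [pi^(t)] and
   [D_t = sum_{i<t} d_i].  The rounds with [D_t + d_t <= kappa mu(z)] form a burn-in
   phase of total occupancy at most [kappa mu(z)], so they contribute at most
   [B kappa].  On the other rounds AM-GM gives
     [d_t g_t <= d_t^2 / (2 eta (D_t + d_t)) + eta (D_t + d_t) g_t^2 / 2
              <= d_t^2 / (2 eta kappa mu(z)) + eta (D_t + d_t) g_t^2 / 2];
   coverability bounds the sum of the first terms by [T C / (2 eta kappa)], and the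
   hypothesis on the squares (with [d_t g_t^2 <= d_t B^2]) bounds the second ones by
   [eta T (beta^2 + B^2) / 2].  Optimizing [kappa] and [eta] gives
   [L^3 <= 27/4 T^2 C B (beta^2 + B^2)], and [C] can be taken arbitrarily close to
   [C^M_{1;h}].  The argument is run on finite sums over finitely many pairs, which
   approximate the expectations from below. *)

Section esum_bounds.
Variables (R : realType) (T : choiceType).

Lemma le_esumZl (S : set T) (f : T -> \bar R) (c : R) : 0 <= c ->
  (forall t, S t -> 0 <= f t)%E ->
  (\esum_(t in S) (c%:E * f t) <= c%:E * \esum_(t in S) f t)%E.
Proof.
move=> c0 f0; apply: ge_ereal_sup => _ [F [finF FS] <-].
rewrite fsbig_finite //= big_seq -ge0_sume_distrr; last first.
  by move=> t; rewrite in_fset_set // inE => /FS /f0.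
rewrite -big_seq; apply: lee_wpmul2l; first by rewrite lee_fin.
by apply: ereal_sup_ubound; exists F => //; rewrite fsbig_finite.
Qed.

Lemma sum_le_esum (s : seq T) (f : T -> \bar R) : uniq s ->
  (forall t, 0 <= f t)%E -> (\sum_(t <- s) f t <= \esum_(t in [set: T]) f t)%E.
Proof.
move=> s_uniq f0; rewrite fsbig_seq //; apply: esum_ge.
by exists [set` s] => //; split => //; exact: finite_seq.
Qed.

Lemma sum_dist_le1 (p : T -> R) (s : seq T) : is_dist p -> uniq s ->
  \sum_(t <- s) p t <= 1.
Proof.
move=> [p0 p1] s_uniq; rewrite -lee_fin -p1 -sumEFin.
by apply: sum_le_esum => // t; rewrite lee_fin.
Qed.

End esum_bounds.

Section trajectory_mass.
Variables (R : realType) (X A : countType) (M : mdp R X A) (pi : policy R X A).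
Hypothesis pi_rns : is_rns_policy pi.

Definition state_law (k : nat) (prev : option (X * A)) (x : X) : R :=
  match prev with None => m_init M x | Some (x0, a0) => m_trans M k x0 a0 x end.

Lemma state_law_dist k prev : is_dist (state_law k prev).
Proof. by case: prev => [[x0 a0]|]; [exact: m_trans_dist | exact: m_init_dist]. Qed.

Lemma state_action_law_ge0 k prev past x a :
  0 <= state_law k prev x * pi k.+1 past x a.
Proof.
by rewrite mulr_ge0 //; [case: (state_law_dist k prev) | case: (pi_rns k.+1 past x)].
Qed.

Lemma esum_state_action_law_le1 k prev past :
  (\esum_(xa in [set: X * A]) (state_law k prev xa.1 * pi k.+1 past xa.1 xa.2)%:E <= 1)%E.
Proof.
rewrite (_ : [set: X * A] = [set: X] `*`` (fun=> [set: A])); last by apply/seteqP.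
rewrite -(esum_esum (a := fun x a => (state_law k prev x * pi k.+1 past x a)%:E));
  last first.
  by move=> x a _ _; rewrite lee_fin state_action_law_ge0.
have [law0 law1] := state_law_dist k prev.
rewrite -law1; apply: le_esum => x _; under eq_esum do rewrite EFinM.
have [pi0 pi1] := pi_rns k.+1 past x.
rewrite -[leRHS]mule1 -pi1; apply: le_esumZl => [|a _]; first exact: law0.
by rewrite lee_fin pi0.
Qed.

Lemma traj_prob_ge0 tau k prev past : 0 <= traj_prob M pi k prev past tau.
Proof.
elim: tau k prev past => [|[x a] tau IH] k prev past //=.
by rewrite mulr_ge0 ?IH // state_action_law_ge0.
Qed.

Lemma esum_traj_prob_le1 n k prev past :
  (\esum_(tau in [set tau | size tau = n]) (traj_prob M pi k prev past tau)%:E <= 1)%E.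
Proof.
elim: n k prev past => [|n IH] k prev past.
  by rewrite (_ : [set tau | _] = [set [::]]) ?esum_set1 //; apply/seteqP; split=> -[].
rewrite (reindex_esum ([set: X * A] `*`` (fun=> [set tau | size tau = n])) _
  (fun p => p.1 :: p.2)); last first.
  split=> [[xa tau] [_ /= ->] //|[xa tau] [xa' tau'] _ _ /= [-> ->] //|].
  by move=> [|xa tau] //= [n_tau]; exists (xa, tau).
rewrite -(esum_esum (a := fun xa tau => (traj_prob M pi k prev past (xa :: tau))%:E));
  last first.
  by move=> *; rewrite lee_fin traj_prob_ge0.
apply: le_trans (esum_state_action_law_le1 k prev past); apply: le_esum => -[x a] _.
set c := state_law k prev x * pi k.+1 past x a.
have c0 : 0 <= c := state_action_law_ge0 k prev past x a.
rewrite (eq_esum (b := fun tau =>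
  c%:E * (traj_prob M pi k.+1 (Some (x, a)) (rcons past (x, a)) tau)%:E)%E); last first.
  by move=> tau _; rewrite -EFinM.
apply: le_trans (le_esumZl c0 _) _; first by move=> tau _; rewrite lee_fin traj_prob_ge0.
by rewrite -[leRHS]mule1; apply: lee_wpmul2l; [rewrite lee_fin | exact: IH].
Qed.

Lemma occ_ge0 h xa : (0 <= occ M pi h xa)%E.
Proof. by apply: esum_ge0 => tau _; rewrite lee_fin traj_prob_ge0. Qed.

Lemma occ_rcons h xa : occ M pi h xa =
  (\esum_(tau in [set tau | size tau = h.-1])
     (traj_prob M pi 0 None [::] (rcons tau xa))%:E)%E.
Proof.
rewrite /occ (_ : [set tau | _] = (rcons^~ xa) @` [set tau | size tau = h.-1]).
  by rewrite esum_image // => s1 s2 _ _ /rcons_inj [].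
by apply/seteqP; split => [tau [tau' [-> ?]]|_ [tau' ? <-]]; exists tau'.
Qed.

Lemma esum_occ_le1 h : (0 < h)%N -> (\esum_(xa in [set: X * A]) occ M pi h xa <= 1)%E.
Proof.
move=> h_gt0; under eq_esum do rewrite occ_rcons.
rewrite (esum_esum (a := fun xa tau => (traj_prob M pi 0 None [::] (rcons tau xa))%:E));
  last first.
  by move=> *; rewrite lee_fin traj_prob_ge0.
rewrite -(reindex_esum _ [set tau | size tau = h] (fun p => rcons p.2 p.1)
  (fun tau => (traj_prob M pi 0 None [::] tau)%:E)); first exact: esum_traj_prob_le1.
split=> [[xa tau] [_ /= n_tau]|[xa tau] [xa' tau'] _ _ /= /rcons_inj [-> ->] //|].
  by rewrite /= size_rcons n_tau prednK.
case/lastP => [/= h0|tau xa]; first by rewrite -h0 in h_gt0.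
by rewrite /= size_rcons => n_tau; exists (xa, tau) => //; split => //=; rewrite -n_tau.
Qed.

End trajectory_mass.

Section occupancy_coverability.
Variables (R : realType) (X A : countType) (M : mdp R X A) (h : nat).
Hypothesis h_gt0 : (0 < h)%N.

Lemma occ_fineK pi xa : is_rns_policy pi -> (fine (occ M pi h xa))%:E = occ M pi h xa.
Proof.
move=> pi_rns; rewrite fineK // ge0_fin_numE ?occ_ge0 //.
apply: le_lt_trans (ltry 1); apply: le_trans (esum_occ_le1 M pi_rns h_gt0).
by have := sum_le_esum (s := [:: xa]) isT (occ_ge0 M pi_rns h); rewrite big_seq1.
Qed.

Lemma sum_fine_occ_mul_le_expect pi f s : is_rns_policy pi ->
  (forall xa, 0 <= f xa) -> uniq s ->
  ((\sum_(xa <- s) fine (occ M pi h xa) * f xa)%:E <= expect M pi h f)%E.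
Proof.
move=> pi_rns f0 s_uniq; rewrite -sumEFin.
under eq_bigr do rewrite EFinM occ_fineK //.
by apply: sum_le_esum => // xa; rewrite mule_ge0 ?occ_ge0 ?lee_fin.
Qed.

Lemma sum_fine_occ_le1 pi s : is_rns_policy pi -> uniq s ->
  \sum_(xa <- s) fine (occ M pi h xa) <= 1.
Proof.
move=> pi_rns s_uniq; rewrite -lee_fin -sumEFin.
under eq_bigr do rewrite occ_fineK //.
exact: le_trans (sum_le_esum s_uniq (occ_ge0 M pi_rns h)) (esum_occ_le1 M pi_rns h_gt0).
Qed.

Lemma ratio_term_ge0 (d : \bar R) (m : R) : (0 <= d)%E -> (0 <= ratio_term d m)%E.
Proof.
move=> d0; rewrite /ratio_term; case: ifPn => // m_gt0.
by rewrite mule_ge0 // lee_fin invr_ge0 ltW.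
Qed.

Lemma cov_term_ge0 pi mu xa : is_rns_policy pi ->
  (0 <= occ M pi h xa * ratio_term (occ M pi h xa) (mu xa))%E.
Proof. by move=> pi_rns; rewrite mule_ge0 ?ratio_term_ge0 ?occ_ge0. Qed.

Lemma cov_term_le_cov_obj pi mu xa : is_rns_policy pi ->
  (occ M pi h xa * ratio_term (occ M pi h xa) (mu xa) <= cov_obj M pi h mu)%E.
Proof.
move=> pi_rns; have := sum_le_esum (s := [:: xa]) isT (cov_term_ge0 mu ^~ pi_rns).
by rewrite big_seq1.
Qed.

Lemma fine_occ_eq0 pi mu xa : is_rns_policy pi -> (cov_obj M pi h mu < +oo)%E ->
  mu xa = 0 -> fine (occ M pi h xa) = 0.
Proof.
move=> pi_rns cov_fin mu0; apply/eqP; rewrite eq_le fine_ge0 ?occ_ge0 // andbT leNgt.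
apply/negP => occ_gt0; move: (cov_term_le_cov_obj mu xa pi_rns).
rewrite /ratio_term mu0 ltxx -(occ_fineK xa pi_rns) mulry gtr0_sg // mul1e.
by rewrite leye_eq => /eqP cov_oo; rewrite cov_oo ltxx in cov_fin.
Qed.

Lemma sum_occ_sq_div_le_cov_obj pi mu s : is_rns_policy pi ->
  (forall xa, 0 <= mu xa) -> uniq s ->
  ((\sum_(xa <- s) fine (occ M pi h xa) ^+ 2 / mu xa)%:E <= cov_obj M pi h mu)%E.
Proof.
move=> pi_rns mu0 s_uniq; rewrite -sumEFin.
apply: le_trans (sum_le_esum s_uniq (cov_term_ge0 mu ^~ pi_rns)).
apply: lee_sum => xa _; rewrite -(occ_fineK xa pi_rns) /ratio_term.
have [mu_gt0|] := ltP 0 (mu xa); first by rewrite -!EFinM expr2 mulrA.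
move=> mu_le0; have -> : mu xa = 0 by apply/le_anti; rewrite mu_le0 mu0.
by rewrite invr0 mulr0 (occ_fineK xa pi_rns) mule_ge0 ?occ_ge0.
Qed.

Lemma cov_obj_ge0 pi mu : is_rns_policy pi -> (0 <= cov_obj M pi h mu)%E.
Proof. by move=> pi_rns; apply: esum_ge0 => xa _; exact: cov_term_ge0. Qed.

Lemma Ccov_fine_ge0 Pi : Pi `<=` @is_rns_policy R X A -> 0 <= fine (Ccov M Pi h).
Proof.
move=> Pi_rns; case Ccov_eq : (Ccov M Pi h) => [c| |] //=.
rewrite leNgt; apply/negP => c_lt0.
have /ereal_inf_lt [_ [mu mu_dist <-] sup_lt0] : (Ccov M Pi h < 0%:E)%E.
  by rewrite Ccov_eq lte_fin.
have covs0 : [set cov_obj M pi h mu | pi in Pi] = set0.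
  apply/seteqP; split => // _ [pi Pi_pi <-].
  have : (cov_obj M pi h mu <= ereal_sup [set cov_obj M pi h mu | pi in Pi])%E.
    by apply: ereal_sup_ubound; exists pi.
  by move=> /le_lt_trans /(_ sup_lt0); rewrite ltNge cov_obj_ge0 //; exact: Pi_rns.
have : (Ccov M Pi h <= ereal_sup [set cov_obj M pi h mu | pi in Pi])%E.
  by apply: ereal_inf_lbound; exists mu.
by rewrite covs0 ereal_sup0 Ccov_eq.
Qed.

Lemma exists_dist_cov_obj_le Pi C : (Ccov M Pi h < +oo)%E -> fine (Ccov M Pi h) < C ->
  exists2 mu, is_dist mu & forall pi, Pi pi -> (cov_obj M pi h mu <= C%:E)%E.
Proof.
move=> Ccov_fin C_gt.
have : (Ccov M Pi h < C%:E)%E.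
  by move: Ccov_fin C_gt; case: (Ccov M Pi h) => [r| |] //= _ _; exact: ltNyr.
move=> /ereal_inf_lt [_ [mu mu_dist <-] sup_lt]; exists mu => // pi Pi_pi.
by apply/ltW/le_lt_trans/sup_lt; apply: ereal_sup_ubound; exists pi.
Qed.

Lemma sum_expect_le (T : nat) (pi : nat -> policy R X A) (f : nat -> X * A -> R) (r : R) :
  (forall t, (t < T)%N -> is_rns_policy (pi t)) ->
  (forall t xa, (t < T)%N -> 0 <= f t xa) ->
  (forall s, uniq s ->
     \sum_(t < T) \sum_(xa <- s) fine (occ M (pi t) h xa) * f t xa <= r) ->
  (\sum_(t < T) expect M (pi t) h (f t) <= r%:E)%E.
Proof.
move=> pi_rns f0 le_r; rewrite /expect.
rewrite -(@esum_sum R _ _ [set: X * A] (index_enum 'I_T) xpredT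
  (fun xa t => occ M (pi t) h xa * (f t xa)%:E)%E); last first.
  move=> xa t _ _; apply: mule_ge0; first exact (occ_ge0 M (pi_rns t (ltn_ord t)) h xa).
  by rewrite lee_fin f0.
apply: ge_ereal_sup => _ [F [F_fin _] <-]; rewrite fsbig_finite //=.
set s := finmap.enum_fset _.
rewrite (_ : (\sum_(xa <- s) \sum_(t < T) (occ M (pi t) h xa * (f t xa)%:E))%E =
  (\sum_(t < T) \sum_(xa <- s) fine (occ M (pi t) h xa) * f t xa)%:E); last first.
  rewrite exchange_big /= -sumEFin; apply: eq_bigr => t _; rewrite -sumEFin.
  by apply: eq_bigr => xa _; rewrite EFinM occ_fineK //; exact: pi_rns.
by rewrite lee_fin le_r // finmap.fset_uniq.
Qed.

End occupancy_coverability.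

Section real_inequalities.
Variable R : realFieldType.

Lemma mul_le_sqr_div_add (d g w eta : R) : 0 < w -> 0 < eta ->
  d * g <= d ^+ 2 / (2 * eta * w) + eta * (w * g ^+ 2) / 2.
Proof.
move=> w_gt0 eta_gt0; rewrite -subr_ge0.
have -> : d ^+ 2 / (2 * eta * w) + eta * (w * g ^+ 2) / 2 - d * g =
    (d - eta * w * g) ^+ 2 / (2 * eta * w).
  by field; rewrite !gt_eqF.
by rewrite divr_ge0 ?sqr_ge0 // ltW // !mulr_gt0.
Qed.

Lemma mul_le_burn_in_amgm (d g D mu B kappa eta : R) :
  0 <= d -> 0 <= g <= B -> 0 <= D -> 0 <= mu -> (mu = 0 -> d = 0) ->
  0 < kappa -> 0 < eta ->
  d * g <= B * (if D + d <= kappa * mu then d else 0)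
           + d ^+ 2 / mu / (2 * eta * kappa) + eta * ((D + d) * g ^+ 2) / 2.
Proof.
move=> d0 /andP[g0 gB] D0 mu0 mu_d kappa_gt0 eta_gt0.
have coef_gt0 : 0 < 2 * eta * kappa by rewrite !mulr_gt0.
have cov_ge0 : 0 <= d ^+ 2 / mu / (2 * eta * kappa).
  by rewrite !divr_ge0 ?sqr_ge0 // ltW.
have sq_ge0 : 0 <= eta * ((D + d) * g ^+ 2) / 2.
  exact: divr_ge0 (mulr_ge0 (ltW eta_gt0) (mulr_ge0 (addr_ge0 D0 d0) (sqr_ge0 g))) _.
case: ifPn => [_|].
  have : d * g <= B * d by rewrite mulrC ler_wpM2r.
  lra.
rewrite -ltNge mulr0 add0r => past_burn_in.
have [d_eq0 | d_neq0] := eqVneq d 0.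
  by move: cov_ge0 sq_ge0; rewrite d_eq0 mul0r => *; lra.
have mu_gt0 : 0 < mu by rewrite lt0r mu0 andbT (contra_neq mu_d d_neq0).
have w_gt0 : 0 < D + d := le_lt_trans (mulr_ge0 (ltW kappa_gt0) mu0) past_burn_in.
have : d ^+ 2 / (2 * eta * (D + d)) <= d ^+ 2 / mu / (2 * eta * kappa).
  rewrite -[leRHS]mulrA -invfM; apply: ler_wpM2l; first exact: sqr_ge0.
  rewrite lef_pV2 ?posrE ?mulr_gt0 //.
  rewrite (_ : mu * _ = 2 * eta * (kappa * mu)); last by ring.
  by apply: ler_wpM2l; [rewrite ltW ?mulr_gt0 | exact: ltW].
by have := mul_le_sqr_div_add d g w_gt0 eta_gt0; lra.
Qed.

Lemma sum_prefix_le (f : nat -> R) (c : R) n :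
  (forall i, (i < n)%N -> 0 <= f i) -> 0 <= c ->
  \sum_(t < n) (if \sum_(i < t) f i + f t <= c then f t else 0) <= c.
Proof.
move=> f0 c0.
suff [] : \sum_(t < n) (if \sum_(i < t) f i + f t <= c then f t else 0) <= \sum_(i < n) f i
  /\ \sum_(t < n) (if \sum_(i < t) f i + f t <= c then f t else 0) <= c by [].
elim: n f0 => [|n IH] f0; first by rewrite !big_ord0.
have [le_sum le_c] := IH (fun i i_lt => f0 i (leqW i_lt)).
rewrite !big_ord_recr /=; case: ifPn => [prefix_le|_].
  by split; [rewrite lerD2r | apply: le_trans prefix_le; rewrite lerD2r].
by rewrite addr0; split => //; apply: le_trans le_sum _; rewrite lerDl f0.
Qed.

Lemma cube_le_of_kappa_eta (L B Tn C K : R) :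
  0 <= L -> 0 <= B -> 0 <= C -> 0 <= K -> (0 < L -> [/\ 0 < B, 0 < Tn & 0 < K]) ->
  (forall kappa eta, 0 < kappa -> 0 < eta ->
     L <= B * kappa + Tn * C / (2 * eta * kappa) + eta * (Tn * K) / 2) ->
  L ^+ 3 <= 27 / 4 * Tn ^+ 2 * C * (B * K).
Proof.
move=> L0 B0 C0 K0 pos bound.
have [-> | L_neq0] := eqVneq L 0.
  rewrite expr0n /=; have := mulr_ge0 (mulr_ge0 (sqr_ge0 Tn) C0) (mulr_ge0 B0 K0); lra.
have L_gt0 : 0 < L by rewrite lt0r L_neq0.
have [B_gt0 T_gt0 K_gt0] := pos L_gt0.
have kappa_gt0 : 0 < L / (3 * B) by rewrite divr_gt0 ?mulr_gt0.
have eta_gt0 : 0 < 2 * L / (3 * Tn * K) by rewrite divr_gt0 ?mulr_gt0.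
have := ler_wpM2r (sqr_ge0 L) (bound _ _ kappa_gt0 eta_gt0).
rewrite -exprS (_ : (_ + _ + _) * L ^+ 2 =
  2 / 3 * L ^+ 3 + 9 / 4 * (Tn ^+ 2 * C * (B * K))); last by field; rewrite !gt_eqF.
lra.
Qed.

End real_inequalities.

Section finite_support_bound.
Variables (R : realFieldType) (I : Type) (s : seq I) (T : nat).
Variables (d g : nat -> I -> R) (mu : I -> R) (B beta C : R).
Hypotheses (B_ge0 : 0 <= B) (d_ge0 : forall t x, (t < T)%N -> 0 <= d t x).
Hypothesis g_range : forall t x, (t < T)%N -> 0 <= g t x <= B.
Hypotheses (mu_ge0 : forall x, 0 <= mu x) (mu_mass : \sum_(x <- s) mu x <= 1).
Hypothesis d_mass : forall t, (t < T)%N -> \sum_(x <- s) d t x <= 1.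
Hypothesis d_abs_cont : forall t x, (t < T)%N -> mu x = 0 -> d t x = 0.
Hypothesis C_ge0 : 0 <= C.
Hypothesis d_cov : forall t, (t < T)%N -> \sum_(x <- s) d t x ^+ 2 / mu x <= C.
Hypothesis g_sq : forall t, (t < T)%N ->
  \sum_(i < t) \sum_(x <- s) d i x * g t x ^+ 2 <= beta ^+ 2.

Let D t x := \sum_(i < t) d i x.

Let D_ge0 t x : (t < T)%N -> 0 <= D t x.
Proof. by move=> t_lt; apply: sumr_ge0 => i _; apply/d_ge0/(ltn_trans (ltn_ord i)). Qed.

Lemma sum_burn_in_le kappa : 0 < kappa ->
  \sum_(t < T) \sum_(x <- s) B * (if D t x + d t x <= kappa * mu x then d t x else 0)
    <= B * kappa.
Proof.
move=> kappa_gt0; rewrite exchange_big /=.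
under eq_bigr do rewrite -mulr_sumr.
rewrite -mulr_sumr ler_wpM2l //; apply: le_trans (_ : \sum_(x <- s) kappa * mu x <= _).
  apply: ler_sum => x _; apply: (sum_prefix_le (f := d^~ x)) => [i|]; first exact: d_ge0.
  exact: mulr_ge0 (ltW kappa_gt0) (mu_ge0 x).
by rewrite -mulr_sumr -[leRHS]mulr1; exact (ler_wpM2l (ltW kappa_gt0) mu_mass).
Qed.

Lemma sum_cov_le kappa eta : 0 < kappa -> 0 < eta ->
  \sum_(t < T) \sum_(x <- s) d t x ^+ 2 / mu x / (2 * eta * kappa)
    <= T%:R * C / (2 * eta * kappa).
Proof.
move=> kappa_gt0 eta_gt0.
rewrite (_ : T%:R * C / _ = \sum_(t < T) (C / (2 * eta * kappa))); last first.
  by rewrite sumr_const card_ord -[RHS]mulr_natl mulrA.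
apply: ler_sum => t _; rewrite -mulr_suml; apply: ler_wpM2r; last exact: d_cov.
by rewrite invr_ge0 ltW // !mulr_gt0.
Qed.

Lemma sum_sq_le eta : 0 < eta ->
  \sum_(t < T) \sum_(x <- s) eta * ((D t x + d t x) * g t x ^+ 2) / 2
    <= eta * (T%:R * (beta ^+ 2 + B ^+ 2)) / 2.
Proof.
move=> eta_gt0; under eq_bigr do rewrite -mulr_suml -mulr_sumr.
rewrite -mulr_suml -mulr_sumr; apply: ler_wpM2r => //; apply: ler_wpM2l; first exact: ltW.
rewrite (_ : T%:R * _ = \sum_(t < T) (beta ^+ 2 + B ^+ 2)); last first.
  by rewrite sumr_const card_ord -[RHS]mulr_natl.
apply: ler_sum => t _; have t_lt := ltn_ord t.
under eq_bigr do rewrite mulrDl.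
rewrite big_split /=; apply: lerD.
  by rewrite /D; under eq_bigr do rewrite mulr_suml; rewrite exchange_big /=; exact: g_sq.
apply: le_trans (_ : \sum_(x <- s) d t x * B ^+ 2 <= _).
  apply: ler_sum => x _; apply: ler_wpM2l; first exact: d_ge0.
  by have /andP[g0 gB] := g_range x t_lt; apply: lerXn2r; rewrite ?nnegrE.
by rewrite -mulr_suml -[leRHS]mul1r ler_wpM2r ?sqr_ge0 // d_mass.
Qed.

Lemma sum_mul_le_kappa_eta kappa eta : 0 < kappa -> 0 < eta ->
  \sum_(t < T) \sum_(x <- s) d t x * g t x <=
    B * kappa + T%:R * C / (2 * eta * kappa) + eta * (T%:R * (beta ^+ 2 + B ^+ 2)) / 2.
Proof.
move=> kappa_gt0 eta_gt0.
apply: le_trans (lerD (lerD (sum_burn_in_le kappa_gt0) (sum_cov_le kappa_gt0 eta_gt0))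
  (sum_sq_le eta_gt0)).
rewrite -!big_split; apply: ler_sum => t _; rewrite -!big_split; apply: ler_sum => x _.
have t_lt := ltn_ord t.
exact: mul_le_burn_in_amgm (d_ge0 x t_lt) (g_range x t_lt) (D_ge0 x t_lt) (mu_ge0 x)
  (d_abs_cont t_lt) kappa_gt0 eta_gt0.
Qed.

Lemma sum_mul_cube_le :
  (\sum_(t < T) \sum_(x <- s) d t x * g t x) ^+ 3
    <= 27 / 4 * T%:R ^+ 2 * C * (beta ^+ 2 * B + B ^+ 3).
Proof.
have g_ge0 t x : (t < T)%N -> 0 <= g t x by move=> /(g_range x) /andP[].
have L_ge0 : 0 <= \sum_(t < T) \sum_(x <- s) d t x * g t x.
  apply: sumr_ge0 => t _; apply: sumr_ge0 => x _.
  exact: mulr_ge0 (d_ge0 x (ltn_ord t)) (g_ge0 t x (ltn_ord t)).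
rewrite (_ : beta ^+ 2 * B + B ^+ 3 = B * (beta ^+ 2 + B ^+ 2)); last by ring.
apply: cube_le_of_kappa_eta => //; last exact: sum_mul_le_kappa_eta.
  by rewrite addr_ge0 ?sqr_ge0.
move=> L_gt0; have [T_eq0|T_gt0] := posnP T.
  by move: L_gt0; rewrite T_eq0 big_ord0 ltxx.
have B_gt0 : 0 < B.
  rewrite lt_def B_ge0 andbT; apply: contraTneq L_gt0 => B_eq0.
  rewrite big1 ?ltxx // => t _; rewrite big1 // => x _.
  have /andP[g0 gB] := g_range x (ltn_ord t).
  by rewrite (_ : g t x = 0) ?mulr0 //; apply/le_anti; rewrite g0 andbT -B_eq0.
by split; rewrite ?ltr0n // ltr_wpDl ?sqr_ge0 ?exprn_gt0.
Qed.

End finite_support_bound.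

Lemma le_powR_of_cube_le (R : realType) (L c Q Tn : R) :
  0 <= c -> 0 <= Q -> 0 <= Tn ->
  (forall C, c < C -> L ^+ 3 <= 27 / 4 * Tn ^+ 2 * C * Q) ->
  L <= 2 * c `^ 3^-1 * Q `^ 3^-1 * Tn `^ (2 / 3).
Proof.
move=> c0 Q0 T0 cube_le.
have [L_le0|/ltW L0] := lerP L 0.
  by apply: le_trans L_le0 _; rewrite !mulr_ge0 ?powR_ge0.
set m := 27 / 4 * Tn ^+ 2 * Q.
have m_ge0 : 0 <= m by rewrite /m; have := mulr_ge0 (sqr_ge0 Tn) Q0; lra.
have cube_le_c : L ^+ 3 <= m * c.
  apply/ler_addgt0Pr => e e_gt0.
  have m1_gt0 : 0 < m + 1 by rewrite ltr_wpDl.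
  have := cube_le (c + e / (m + 1)); rewrite ltrDl divr_gt0 // => /(_ isT) /le_trans; apply.
  rewrite (_ : 27 / 4 * _ * _ * Q = m * (c + e / (m + 1))); last by rewrite /m; ring.
  by rewrite mulrDr lerD2l mulrCA ger_pMr // ler_pdivrMr // mul1r lerDl.
have cube_le_8 : L ^+ 3 <= 8 * Tn ^+ 2 * c * Q.
  apply: le_trans cube_le_c _; rewrite /m.
  by have := mulr_ge0 (mulr_ge0 (sqr_ge0 Tn) c0) Q0; lra.
have powR_cube x : 0 <= x -> (x `^ 3^-1) ^+ 3 = x.
  by move=> x0; rewrite -powR_mulrn ?powR_ge0 // -powRrM mulVf ?powRr1.
have powR_23 : (Tn `^ (2 / 3)) ^+ 3 = Tn ^+ 2.
  rewrite -powR_mulrn ?powR_ge0 // -powRrM -powR_mulrn //; congr (_ `^ _).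
  by rewrite divfK.
rewrite -(@ler_pXn2r _ 3) // ?nnegrE; last by rewrite !mulr_ge0 // ?powR_ge0.
by rewrite !exprMn !powR_cube // powR_23; lra.
Qed.

Lemma sum_occ_mul_cube_le (R : realType) (X A : countType) (M : mdp R X A) (h T : nat)
    (pi : nat -> policy R X A) (g : nat -> X * A -> R) (mu : X * A -> R) (B beta C : R)
    (s : seq (X * A)) :
  (0 < h)%N -> uniq s -> 0 <= B -> 0 <= C -> is_dist mu ->
  (forall t, (t < T)%N -> is_rns_policy (pi t)) ->
  (forall t xa, (t < T)%N -> 0 <= g t xa <= B) ->
  (forall t, (t < T)%N -> (cov_obj M (pi t) h mu <= C%:E)%E) ->
  (forall t, (t < T)%N ->
     (\sum_(i < t) expect M (pi i) h (fun xa => (g t xa ^+ 2)%R) <= (beta ^+ 2)%:E)%E) ->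
  (\sum_(t < T) \sum_(xa <- s) fine (occ M (pi t) h xa) * g t xa) ^+ 3
    <= 27 / 4 * T%:R ^+ 2 * C * (beta ^+ 2 * B + B ^+ 3).
Proof.
move=> h_gt0 s_uniq B_ge0 C_ge0 mu_dist pi_rns hg mu_cov hsq.
have [mu_ge0 _] := mu_dist.
apply: (sum_mul_cube_le (d := fun t xa => fine (occ M (pi t) h xa)) (mu := mu)) => //.
- by move=> t xa t_lt; exact: fine_ge0 (occ_ge0 M (pi_rns t t_lt) h xa).
- exact: sum_dist_le1.
- by move=> t t_lt; exact (sum_fine_occ_le1 M h_gt0 (pi_rns t t_lt) s_uniq).
- move=> t xa t_lt; apply: (fine_occ_eq0 h_gt0 (pi_rns t t_lt)).
  exact: le_lt_trans (mu_cov t t_lt) (ltry _).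
- move=> t t_lt; rewrite -lee_fin; apply: le_trans (mu_cov t t_lt).
  exact (sum_occ_sq_div_le_cov_obj M h_gt0 (pi_rns t t_lt) mu_ge0 s_uniq).
- move=> t t_lt; rewrite -lee_fin -sumEFin; apply: le_trans (hsq t t_lt).
  apply: lee_sum => i _; have i_lt : (i < T)%N := ltn_trans (ltn_ord i) t_lt.
  exact (sum_fine_occ_mul_le_expect M h_gt0 (pi_rns i i_lt)
    (fun xa => sqr_ge0 (g t xa)) s_uniq).
Qed.

Theorem lemmaI8 (R : realType) (X A : countType) (H : nat) (M : mdp R X A)
  (Pi : set (policy R X A)) (HPi : Pi `<=` @is_rns_policy R X A)
  (h : nat) (hh : (1 <= h <= H)%N)
  (T : nat) (B beta : R) (g : nat -> X * A -> R) (pi : nat -> policy R X A)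
  (hg : forall t xa, (t < T)%N -> 0 <= g t xa <= B)
  (hpi : forall t, (t < T)%N -> Pi (pi t))
  (hsq : forall t, (t < T)%N ->
     (\sum_(i < t) expect M (pi i) h (fun xa => (g t xa ^+ 2)%R) <= (beta ^+ 2)%:E)%E)
  (hC : (Ccov M Pi h < +oo)%E) :
  (\sum_(t < T) expect M (pi t) h (g t)
     <= (2 * (fine (Ccov M Pi h)) `^ (3^-1) * (beta ^+ 2 * B + B ^+ 3) `^ (3^-1)
           * (T%:R) `^ (2 / 3))%:E)%E.
Proof.
have h_gt0 : (0 < h)%N by case/andP: hh.
have pi_rns t : (t < T)%N -> is_rns_policy (pi t) by move=> /hpi /HPi.
have Ccov_ge0 := Ccov_fine_ge0 M h HPi.
have [B_lt0|B_ge0] := ltP B 0.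
  rewrite big1 => [|t _]; first by rewrite lee_fin !mulr_ge0 ?powR_ge0.
  apply: esum1 => xa _; have /andP[g0 gB] := hg t xa (ltn_ord t).
  by have := le_lt_trans (le_trans g0 gB) B_lt0; rewrite ltxx.
apply: (sum_expect_le h_gt0 pi_rns) => [t xa t_lt|s s_uniq].
  by case/andP: (hg t xa t_lt).
apply: le_powR_of_cube_le => [//||//|C C_gt].
  exact: addr_ge0 (mulr_ge0 (sqr_ge0 beta) B_ge0) (exprn_ge0 3 B_ge0).
have [mu mu_dist mu_cov] := exists_dist_cov_obj_le hC C_gt.
apply: (sum_occ_mul_cube_le (mu := mu)) => //; first exact: le_trans Ccov_ge0 (ltW C_gt).
by move=> t /hpi; exact: mu_cov.
Qed.
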